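(* Let $k\ge 2$ be an integer, $1/2<q<1$. Let $y^*$ be a point with all coordinates strictly positive at which $P$ attains its maximum over $\Delta_k$, and suppose $y^*\neq(1/k,\dots,1/k)$, so that (as shown previously) its coordinates take exactly two values $a<1-q<b$. Then exactly one coordinate of $y^*$ equals $b$ (and the remaining $k-1$ coordinates equal $a$).
   Context: $\Delta_k=\{y\in\mathbb R^k: y_i\ge 0,\ \sum_i y_i=1\}$. For $y\in\Delta_k$, $P(y)=\sum_{i=1}^k y_i^q\prod_{j\ne i}(1-y_j)^q$. *)

From HB Require Import structures.
From mathcomp Require Import all_boot all_order all_algebra.
From mathcomp Require Import all_classical all_reals all_analysis.
Set Implicit Arguments. Unset Strict Implicit. Unset Printing Implicit Defensive.
Import Order.TTheory GRing.Theory Num.Theory.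
Local Open Scope ring_scope.

Definition in_simplex (R : realType) (k : nat) (y : 'I_k -> R) : Prop :=
  (forall i, 0 <= y i) /\ \sum_(i < k) y i = 1.

Definition P_simplex (R : realType) (k : nat) (q : R) (y : 'I_k -> R) : R :=
  \sum_(i < k) (y i `^ q * \prod_(j < k | j != i) (1 - y j) `^ q).

From HB Require Import structures.
From mathcomp Require Import all_boot all_order all_algebra.
From mathcomp Require Import all_classical all_reals all_analysis.
From mathcomp Require Import ring lra.
Import Order.TTheory GRing.Theory Num.Theory numFieldNormedType.Exports.
Set Implicit Arguments.
Unset Strict Implicit.
Unset Printing Implicit Defensive.
Local Open Scope ring_scope.

(* Suppose an interior maximiser y had y_i = a < b = y_j = y_j' with j <> j'.
   Freezing all coordinates but two, P becomes a positive multiple of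
   [pair_fun K u v] along the segment u + v = const.  Stationarity for the
   transfer between i and j determines K; the second-order condition for the
   transfer between j and j' then says
   [q x + (1 - q) y + x^(-q) y^(q-1) <= 2] for [x = (1-a)/(1-b)], [y = a/b],
   which contradicts the weighted AM-GM inequality. *)

Section RealPowers.
Variable R : realType.
Implicit Types x y q r : R.

Lemma ln_lt_subr1 x : 0 < x -> x != 1 -> ln x < x - 1.
Proof.
move=> x0 x1; rewrite ltrBrDl -[X in _ < X]lnK ?posrE //.
apply: expR_gt1Dx; apply: contra x1 => /eqP lnx0.
by rewrite -[x]lnK ?posrE // lnx0 expR0.
Qed.

Lemma ln_le_subr1 x : 0 < x -> ln x <= x - 1.
Proof.
move=> x0; have [->|x1] := eqVneq x 1; first by rewrite ln1 subrr.
exact/ltW/ln_lt_subr1.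
Qed.

Lemma powRV x r : 0 <= x -> (x^-1) `^ r = (x `^ r)^-1.
Proof. by move=> x0; rewrite -powR_inv1 // -powRrM mulN1r powRN. Qed.

Lemma powR_subr1 x r : 0 < x -> x `^ (r - 1) = x `^ r / x.
Proof.
move=> x0; rewrite powRB; last by apply/implyP => _; rewrite gt_eqF.
by rewrite powRr1 // ltW.
Qed.

Lemma powR_subr2 x r : 0 < x -> x `^ (r - 2) = x `^ r / x ^+ 2.
Proof.
move=> x0; rewrite (_ : r - 2 = r - 1 - 1); last by ring.
by rewrite !powR_subr1 // expr2 invfM mulrA.
Qed.

Lemma wmean_add_inv_geomean_gt2 q x y : 0 < q <= 1 -> 0 < x -> 0 < y -> x != 1 ->
  2 < q * x + (1 - q) * y + x `^ (- q) * y `^ (q - 1).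
Proof.
move=> /andP[q0 q1] x0 y0 x1.
have lnx := ln_lt_subr1 x0 x1; have lny := ln_le_subr1 y0.
have -> : x `^ (- q) * y `^ (q - 1) = expR (- q * ln x + (q - 1) * ln y).
  by rewrite expRD /powR !gt_eqF.
have := expR_ge1Dx (- q * ln x + (q - 1) * ln y).
have : q * ln x < q * (x - 1) by rewrite ltr_pM2l.
have : (1 - q) * ln y <= (1 - q) * (y - 1) by rewrite ler_wpM2l // subr_ge0.
lra.
Qed.

End RealPowers.

Section Derivatives.
Variable R : realType.
Implicit Types (f g : R -> R) (t d e : R).
Local Open Scope classical_set_scope.

Lemma is_derive_powR_comp g (r t e : R) : 0 < g t -> is_derive t 1 g e ->
  is_derive t 1 (fun s => g s `^ r) (r * g t `^ (r - 1) * e).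
Proof. by move=> gt0 dg; exact: is_derive1_comp (is_derive1_powR r gt0) dg. Qed.

Lemma is_derive_add f g t (df dg : R) : is_derive t 1 f df -> is_derive t 1 g dg ->
  is_derive t 1 (fun s => f s + g s) (df + dg).
Proof. by move=> ? ?; apply: is_derive_eq. Qed.

Lemma is_derive_opp f t (df : R) : is_derive t 1 f df ->
  is_derive t 1 (fun s => - f s) (- df).
Proof. by move=> ?; apply: is_derive_eq. Qed.

Lemma is_derive_mul f g t (df dg : R) : is_derive t 1 f df -> is_derive t 1 g dg ->
  is_derive t 1 (fun s => f s * g s) (f t * dg + g t * df).
Proof. by move=> ? ?; apply: is_derive_eq. Qed.

Lemma is_derive_max_eq0 f d e : 0 < e ->
  (forall t, - e < t < e -> derivable f t (1 : R)) -> is_derive (0 : R) 1 f d ->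
  (forall t, - e < t < e -> f t <= f 0) -> d = 0.
Proof.
move=> e0 fd df fmax.
have df0 : is_derive (0 : R) 1 f 0.
  apply: (@derive1_at_max _ f (- e) e).
  - by rewrite ge0_cp // ltW.
  - by move=> t; rewrite in_itv => /fd.
  - by rewrite in_itv /= oppr_lt0 e0.
  - by move=> t; rewrite in_itv => /fmax.
by rewrite -(@derive_val _ _ _ _ _ _ _ df) (@derive_val _ _ _ _ _ _ _ df0).
Qed.

Lemma is_derive_gt0_right g d : is_derive (0 : R) 1 g d -> g 0 = 0 -> 0 < d ->
  exists2 e, 0 < e & forall h, 0 < h < e -> 0 < g h.
Proof.
move=> [gd dg] g0 d0.
have qcvg : (fun h : R => h^-1 *: ((g \o shift 0) (h *: 1) - g 0)) @ 0^' --> d.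
  by rewrite -dg; exact: gd.
have [e /= e0 He] : nbhs_ball (0 : R)
    (fun h : R => h != 0 -> 0 < h^-1 *: ((g \o shift 0) (h *: 1) - g 0)).
  by apply/nbhs_ballP; exact: cvgr_gt qcvg 0 d0.
exists e => // h /andP[h0 he].
have := He h; rewrite /ball /= sub0r normrN gtr0_norm // => /(_ he).
rewrite gt_eqF // => /(_ isT).
by rewrite [_%:A]mulr1 addr0 g0 subr0 pmulr_rgt0 // invr_gt0.
Qed.

(* Second-order necessary condition: if [f' > 0] just right of a maximum, the
   mean value theorem would make [f] increase there. *)
Lemma is_derive2_max_le0 f (df : R -> R) d e : 0 < e ->
  (forall t, - e < t < e -> is_derive t 1 f (df t)) -> is_derive (0 : R) 1 df d ->
  (forall t, - e < t < e -> f t <= f 0) -> d <= 0.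
Proof.
move=> e0 fd dfd fmax; rewrite leNgt; apply/negP => d0.
have in_e t : 0 <= t < e -> - e < t < e.
  by move=> /andP[t0 te]; rewrite te (lt_le_trans _ t0) // oppr_lt0.
have df0 : df 0 = 0.
  apply: (is_derive_max_eq0 e0 _ (fd 0 _) fmax); last by rewrite oppr_lt0 e0.
  by move=> t /fd [].
have [e' e'0 dfpos] := is_derive_gt0_right dfd df0 d0.
pose h := Num.min e e' / 2.
have mpos : 0 < Num.min e e' by rewrite lt_min e0 e'0.
have h0 : 0 < h by rewrite divr_gt0.
have hmin : h < Num.min e e' by rewrite /h ltr_pdivrMr // ltr_pMr // ltr1n.
have he : h < e by rewrite (lt_le_trans hmin) // ge_min lexx.
have he' : h < e' by rewrite (lt_le_trans hmin) // ge_min lexx orbT.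
have [c] : exists2 c, c \in `]0, h[%R & f h - f 0 = df c * (h - 0).
  apply: MVT => // [x|].
    by rewrite in_itv /= => /andP[x0 xh]; apply: fd; rewrite in_e ?ltW ?(lt_trans xh).
  apply: derivable_within_continuous => x; rewrite in_itv /= => /andP[x0 xh].
  by case: (fd x); rewrite // in_e // x0 (le_lt_trans xh).
rewrite in_itv /= => /andP[c0 ch] fhE.
have : f h <= f 0 by apply: fmax; rewrite in_e // ltW.
have dfc : 0 < df c by rewrite dfpos // c0 (lt_trans ch).
by rewrite -subr_le0 fhE subr0 leNgt pmulr_rgt0 // h0.
Qed.

End Derivatives.

Ltac derive_tac :=
  repeat first [ apply: is_derive_add | apply: is_derive_opp | apply: is_derive_mul
               | apply: is_derive_powR_comp; first by []
               | apply: is_derive_cst | apply: is_derive_eq ].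

Section PairFunction.
Variables (R : realType) (q : R).
Implicit Types (K u v t b : R).

Definition pair_fun K u v :=
  K * ((1 - u) `^ q * (1 - v) `^ q) + u `^ q * (1 - v) `^ q + v `^ q * (1 - u) `^ q.

Definition odds_pow x := x `^ q / (1 - x) `^ q.

Definition pair_slope K u v :=
  K * (1 - u) `^ (q - 1) * (1 - v) `^ (q - 1) * (v - u)
  + u `^ (q - 1) * (1 - v) `^ (q - 1) * (1 + u - v)
  - v `^ (q - 1) * (1 - u) `^ (q - 1) * (1 + v - u).

Definition pair_curv K b :=
  2 * (b `^ (q - 2) * (1 - b) `^ (q - 2) * (q - 1 + 2 * b * (1 - b))
       - K * (1 - b) `^ (q - 1) ^+ 2).

Lemma transfer_bounds u v t : u + v <= 1 -> - u < t < v ->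
  [/\ 0 < u + t, 0 < 1 - (u + t), 0 < v - t & 0 < 1 - (v - t)].
Proof. by move=> uv /andP[ut tv]; split; lra. Qed.

Lemma is_derive_pair_fun K u v t : u + v <= 1 -> - u < t < v ->
  is_derive t 1 (fun s => pair_fun K (u + s) (v - s)) (q * pair_slope K (u + t) (v - t)).
Proof.
move=> uv /(transfer_bounds uv) [p1 p2 p3 p4].
rewrite /pair_fun; apply: is_derive_eq; first by derive_tac.
rewrite /pair_slope /= !powR_subr1 //.
by field; rewrite !gt_eqF.
Qed.

Lemma is_derive_pair_slope_sym K b : 0 < b < 1 ->
  is_derive (0 : R) 1 (fun t => q * pair_slope K (b + t) (b - t)) (q * pair_curv K b).
Proof.
move=> /andP[b0 b1].
have p1 : 0 < b + 0 by rewrite addr0.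
have p2 : 0 < b - 0 by rewrite subr0.
have p3 : 0 < 1 - (b + 0) by rewrite addr0 subr_gt0.
have p4 : 0 < 1 - (b - 0) by rewrite subr0 subr_gt0.
rewrite /pair_slope; apply: is_derive_eq; first by derive_tac.
rewrite /pair_curv /= addr0 subr0 !powR_subr2 ?subr_gt0 // !powR_subr1 ?subr_gt0 //.
by field; rewrite !gt_eqF ?subr_gt0.
Qed.

Lemma pair_curv_gt0 K a b : 0 < q < 1 -> 0 < a -> a < b -> b < 1 ->
  pair_slope K a b = 0 -> 0 < pair_curv (K + odds_pow a - odds_pow b) b.
Proof.
move=> q01 a0 ab b1 slope0.
have b0 : 0 < b by rewrite (lt_trans a0).
have A0 : 0 < 1 - a by rewrite subr_gt0 (lt_trans ab).
have B0 : 0 < 1 - b by rewrite subr_gt0.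
have ba0 : 0 < b - a by rewrite subr_gt0.
have pa0 : 0 < a `^ q by rewrite powR_gt0.
have pb0 : 0 < b `^ q by rewrite powR_gt0.
have pA0 : 0 < (1 - a) `^ q by rewrite powR_gt0.
have pB0 : 0 < (1 - b) `^ q by rewrite powR_gt0.
have AB1 : (1 - a) / (1 - b) != 1.
  by rewrite -[X in _ != X](divff (lt0r_neq0 B0)) (can_eq (divfK _)) ?gt_eqF //; lra.
have q01' : 0 < q <= 1 by case/andP: q01 => -> /ltW.
have := wmean_add_inv_geomean_gt2 q01' (divr_gt0 A0 B0) (divr_gt0 a0 b0) AB1.
rewrite powRN powR_subr1 ?divr_gt0 // !powRM ?invr_ge0 ?ltW // !powRV ?ltW //.
set M := q * _ + _ + _ => mean_gt2.
have -> : K = K - pair_slope K a b * ((1 - a) * (1 - b) / ((b - a) * (1 - a) `^ q * (1 - b) `^ q)).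
  by rewrite slope0 mul0r subr0.
suff -> : pair_curv (K - pair_slope K a b * ((1 - a) * (1 - b) / ((b - a) * (1 - a) `^ q * (1 - b) `^ q))
          + odds_pow a - odds_pow b) b = 2 * b `^ q * (1 - b) `^ q / (b * (1 - b) * (b - a)) * (M - 2).
  by rewrite mulr_gt0 ?subr_gt0 // !divr_gt0 // !mulr_gt0.
rewrite /M /pair_curv /pair_slope /odds_pow !powR_subr2 // !powR_subr1 //.
by field; rewrite !gt_eqF.
Qed.

End PairFunction.

Lemma bigD2 (T : Type) (idx : T) (op : Monoid.com_law idx) (I : finType) (F : I -> T) m n :
  m != n ->
  \big[op/idx]_l F l = op (F m) (op (F n) (\big[op/idx]_(l | (l != m) && (l != n)) F l)).
Proof.
move=> mn; rewrite (bigD1 m) // (bigD1 n) /=; last by rewrite eq_sym.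
by congr (op _ (op _ _)); apply: eq_bigl => l; rewrite andbC.
Qed.

Lemma sum_except2 (R : zmodType) (I : finType) (F : I -> R) m n : m != n ->
  \sum_(l | (l != m) && (l != n)) F l = \sum_l F l - F m - F n.
Proof.
by move=> mn; rewrite (bigD2 _ _ mn) /= [F m + _]addrC addrK [F n + _]addrC addrK.
Qed.

Section Simplex.
Variables (R : realType) (k : nat) (q : R).
Implicit Types (y z : 'I_k -> R) (l m n : 'I_k).

Lemma P_simplex_factor z : (forall l, z l < 1) ->
  P_simplex q z = (\prod_l (1 - z l) `^ q) * \sum_l odds_pow q (z l).
Proof.
move=> z1; rewrite /P_simplex mulr_sumr; apply: eq_bigr => l _.
rewrite [in RHS](bigD1 l) //= /odds_pow.
by field; rewrite gt_eqF // powR_gt0 // subr_gt0.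
Qed.

Definition odds_except z m n := \sum_(l | (l != m) && (l != n)) odds_pow q (z l).

Lemma P_simplex_pair z m n : m != n -> (forall l, z l < 1) ->
  P_simplex q z = (\prod_(l | (l != m) && (l != n)) (1 - z l) `^ q) *
    pair_fun q (odds_except z m n) (z m) (z n).
Proof.
move=> mn z1; rewrite P_simplex_factor // !(bigD2 _ _ mn) /= /odds_except /pair_fun /odds_pow.
by field; rewrite !gt_eqF // powR_gt0 // subr_gt0.
Qed.

Lemma simplex_pair_le1 y m n : in_simplex y -> m != n -> y m + y n <= 1.
Proof.
move=> [y0 <-] mn; rewrite (bigD2 _ _ mn) /= addrA lerDl.
by apply: sumr_ge0 => l _.
Qed.

Lemma pos_simplex_lt1 y m n : in_simplex y -> (forall j, 0 < y j) -> m != n ->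
  forall l, y l < 1.
Proof.
move=> ys ypos mn l.
have [j jl] : exists j, j != l.
  by case: (eqVneq m l) => [<-|ml]; [exists n; rewrite eq_sym | exists m].
by have := simplex_pair_le1 ys jl; have := ypos j; lra.
Qed.

Definition transfer y m n t : 'I_k -> R :=
  fun l => if l == m then y m + t else if l == n then y n - t else y l.

Lemma transfer_out y m n t l : (l != m) && (l != n) -> transfer y m n t l = y l.
Proof. by rewrite /transfer => /andP[/negbTE -> /negbTE ->]. Qed.

Lemma transfer_pos y m n t : m != n -> (forall l, 0 < y l) -> - y m < t < y n ->
  forall l, 0 < transfer y m n t l.
Proof.
move=> mn ypos /andP[tm tn] l; rewrite /transfer.
case: eqP => _; first by rewrite -ltrBlDl sub0r.
by case: eqP => _; rewrite ?subr_gt0.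
Qed.

Lemma transfer_in_simplex y m n t : m != n -> in_simplex y -> (forall l, 0 < y l) ->
  - y m < t < y n -> in_simplex (transfer y m n t).
Proof.
move=> mn [_ ysum] ypos tmn; split=> [l|]; first exact/ltW/transfer_pos.
rewrite -ysum !(bigD2 _ _ mn) /= /transfer eqxx eq_sym (negbTE mn) eqxx.
rewrite (eq_bigr y) => [|l]; last exact: transfer_out.
by rewrite addrA addrACA subrr addr0 addrA.
Qed.

Lemma pair_fun_local_max y m n t : m != n -> in_simplex y -> (forall l, 0 < y l) ->
  (forall z, in_simplex z -> P_simplex q z <= P_simplex q y) -> - y m < t < y n ->
  pair_fun q (odds_except y m n) (y m + t) (y n - t) <=
  pair_fun q (odds_except y m n) (y m) (y n).
Proof.
move=> mn ys ypos ymax tmn.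
have zs := transfer_in_simplex mn ys ypos tmn.
have zpos := transfer_pos mn ypos tmn.
have zm : transfer y m n t m = y m + t by rewrite /transfer eqxx.
have zn : transfer y m n t n = y n - t by rewrite /transfer eq_sym (negbTE mn) eqxx.
have zK : odds_except (transfer y m n t) m n = odds_except y m n.
  by apply: eq_bigr => l /transfer_out ->.
have zC : \prod_(l | (l != m) && (l != n)) (1 - transfer y m n t l) `^ q =
          \prod_(l | (l != m) && (l != n)) (1 - y l) `^ q.
  by apply: eq_bigr => l /transfer_out ->.
have C0 : 0 < \prod_(l | (l != m) && (l != n)) (1 - y l) `^ q.
  by apply: prodr_gt0 => l _; rewrite powR_gt0 // subr_gt0 (pos_simplex_lt1 ys ypos mn).
have := ymax _ zs.
rewrite (P_simplex_pair mn (pos_simplex_lt1 zs zpos mn)).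
rewrite (P_simplex_pair mn (pos_simplex_lt1 ys ypos mn)).
by rewrite zm zn zK zC ler_pM2l.
Qed.

End Simplex.

Lemma interior_max_larger_uniq (R : realType) (k : nat) (q : R) (y : 'I_k -> R) i j j' :
  0 < q < 1 -> in_simplex y -> (forall l, 0 < y l) ->
  (forall z : 'I_k -> R, in_simplex z -> P_simplex q z <= P_simplex q y) ->
  y i < y j -> y j' = y j -> j' = j.
Proof.
move=> q01 ys ypos ymax ij yj'; apply/eqP/negPn/negP => j'j.
have q0 : q != 0 by rewrite gt_eqF //; case/andP: q01.
have jj' : j != j' by rewrite eq_sym.
have ij1 : i != j by apply: contraTneq ij => ->; rewrite ltxx.
have b1 := pos_simplex_lt1 ys ypos ij1 j.
set a := y i in ij *; set b := y j in ij yj' b1 *.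
have a0 : 0 < a := ypos i.
set K1 := odds_except q y i j; set K2 := odds_except q y j j'.
have slope0 : pair_slope q K1 a b = 0.
  have ab1 : a + b <= 1 := simplex_pair_le1 ys ij1.
  have in_ab t : - a < t < a -> - a < t < b.
    by move=> /andP[-> ta]; rewrite (lt_trans ta).
  have df0 : is_derive (0 : R) 1 (fun t => pair_fun q K1 (a + t) (b - t))
                       (q * pair_slope q K1 a b).
    have := is_derive_pair_fun q K1 (t := 0) ab1.
    by rewrite addr0 subr0 oppr_lt0 a0 (lt_trans a0 ij); apply.
  apply: (mulfI q0); rewrite mulr0; apply: (is_derive_max_eq0 a0 _ df0).
  - by move=> t /in_ab /(is_derive_pair_fun q K1) [].
  - by move=> t /in_ab /(pair_fun_local_max ij1 ys ypos ymax); rewrite addr0 subr0.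
have curv_le0 : pair_curv q K2 b <= 0.
  have b0 : 0 < b by rewrite (lt_trans a0).
  have b01 : 0 < b < 1 by rewrite b0.
  have bb1 : b + b <= 1 by rewrite -{2}yj'; exact: simplex_pair_le1 ys jj'.
  have q_gt0 : 0 < q by case/andP: q01.
  rewrite -(pmulr_rle0 _ q_gt0).
  apply: (is_derive2_max_le0 (f := fun t => pair_fun q K2 (b + t) (b - t)) b0 _
           (is_derive_pair_slope_sym q K2 b01)).
  - by move=> t /(is_derive_pair_fun q K2 bb1).
  - move=> t tb; have := pair_fun_local_max jj' ys ypos ymax (t := t).
    by rewrite yj' addr0 subr0; apply.
have Krel : K2 = K1 + odds_pow q a - odds_pow q b.
  by rewrite /K1 /K2 /odds_except !sum_except2 // yj'; ring.
have := pair_curv_gt0 q01 a0 ij b1 slope0.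
by rewrite -Krel ltNge curv_le0.
Qed.

Unset Implicit Arguments.

Theorem lemma4p4 (R : realType) (k : nat) (q : R) (y : 'I_k -> R) (a b : R) :
  (2 <= k)%N -> 1 / 2 < q -> q < 1 ->
  in_simplex y -> (forall i, 0 < y i) ->
  (forall z : 'I_k -> R, in_simplex z -> P_simplex q z <= P_simplex q y) ->
  (exists i, y i <> k%:R^-1) ->
  a < 1 - q -> 1 - q < b ->
  (forall i, y i = a \/ y i = b) -> (exists i, y i = a) -> (exists i, y i = b) ->
  exists i, y i = b /\ (forall j, j != i -> y j = a).
Proof.
move=> _ q12 q1 ys ypos ymax _ aq bq yab [i yi] [j yj].
have q01 : 0 < q < 1 by rewrite q1 andbT (lt_trans _ q12).
exists j; split=> // l lj; case: (yab l) => // yl.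
have := @interior_max_larger_uniq _ _ q y i j l q01 ys ypos ymax.
by rewrite yi yj yl (lt_trans aq bq) => /(_ isT erefl) /eqP; rewrite (negbTE lj).
Qed.
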